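(* Let $K$ be a $p$-adic number field and $f\in\mathcal{A}_K[1,1]$. Let $q$ be a positive power of $p$, and assume there exist $\zeta,\zeta'\in\mu_\infty$ with $f(\zeta)=\zeta'$. If $f(X)^q=f(X^q)$ (as Laurent series), then $f$ is special.
   Context: $\mathbb{C}_p$ is the completion of an algebraic closure of $\mathbb{Q}_p$ containing $K$; $\mu_\infty$ is the group of roots of unity in $\mathbb{C}_p$. $\mathcal{A}_K[1,1]$ is the set of Laurent series $\sum_{n\in\mathbb{Z}}f_nX^n$ with $f_n\in K$ and $|f_n|_p\to0$ as $|n|\to\infty$. $f$ is special if $f=\eta X^m$ for some $\eta\in\mu_\infty$ and $m\in\mathbb{Z}$. *)

From HB Require Import structures.
From mathcomp Require Import all_boot all_order all_algebra.
From mathcomp Require Import reals.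
Set Implicit Arguments. Unset Strict Implicit. Unset Printing Implicit Defensive.
Import Order.TTheory GRing.Theory Num.Theory.
Local Open Scope ring_scope.

Section Padic.
Variables (R : realType) (C : fieldType) (abs : C -> R).

Definition seq_cvg_to (u : nat -> C) (l : C) : Prop :=
  forall eps : R, 0 < eps ->
    exists N : nat, forall n : nat, (N <= n)%N -> abs (u n - l) < eps.

Definition cauchy_seq (u : nat -> C) : Prop :=
  forall eps : R, 0 < eps -> exists N : nat,
    forall m n : nat, (N <= m)%N -> (N <= n)%N -> abs (u m - u n) < eps.

Definition is_p_adic_abs (p : nat) : Prop :=
  [/\ forall x, 0 <= abs x,
      forall x, abs x = 0 <-> x = 0,
      forall x y, abs (x * y) = abs x * abs y,
      forall x y, abs (x + y) <= Num.max (abs x) (abs y) &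
      abs (p%:R) = (p%:R)^-1].

Definition Qp_elt (x : C) : Prop :=
  exists u : nat -> rat, seq_cvg_to (fun n => ratr (u n)) x.

Definition algebraic_over_Qp (x : C) : Prop :=
  exists P : {poly C}, [/\ P != 0, forall i, Qp_elt P`_i & root P x].

(* (C, abs) is C_p: complete, algebraically closed, and the completion of
   the algebraic closure of Q_p (algebraic elements are dense) *)
Definition is_Cp (p : nat) : Prop :=
  [/\ is_p_adic_abs p,
      GRing.closed_field_axiom C,
      forall u, cauchy_seq u -> exists l, seq_cvg_to u l &
      forall x (eps : R), 0 < eps ->
        exists y, algebraic_over_Qp y /\ abs (x - y) < eps].

Definition is_padic_field (K : C -> Prop) : Prop :=
  [/\ forall x, Qp_elt x -> K x,
      forall x y, K x -> K y -> K (x + y) /\ K (- x) /\ K (x * y),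
      forall x, K x -> x != 0 -> K x^-1 &
      exists s : seq C, (forall i, (i < size s)%N -> K s`_i) /\
        forall x, K x -> exists c : nat -> C,
          (forall i, Qp_elt (c i)) /\ x = \sum_(i < size s) c i * s`_i].

(* Laurent series f = sum_n f n X^n, coefficients in K, |f n| -> 0 *)
Definition in_AK11 (K : C -> Prop) (f : int -> C) : Prop :=
  (forall n, K (f n)) /\
  forall eps : R, 0 < eps -> exists N : nat,
    forall n : int, (N < `|n|)%N -> abs (f n) < eps.

Definition two_sided_sum_to (a : int -> C) (l : C) : Prop :=
  seq_cvg_to (fun N => \sum_(0 <= k < N.*2.+1) a (k%:Z - N%:Z)) l.

Definition laurent_mul_to (g h r : int -> C) : Prop :=
  forall n : int, two_sided_sum_to (fun k => g k * h (n - k)) (r n).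

Fixpoint laurent_pow_to (f : int -> C) (k : nat) (r : int -> C) : Prop :=
  match k with
  | 0 => forall n, r n = (n == 0)%:R
  | k'.+1 => exists s, laurent_pow_to f k' s /\ laurent_mul_to s f r
  end.

Definition laurent_subst_pow (q : nat) (f : int -> C) : int -> C :=
  fun n => if (q%:Z %| n)%Z then f (n %/ q%:Z)%Z else 0.

Definition laurent_eval_to (f : int -> C) (z w : C) : Prop :=
  two_sided_sum_to (fun n => f n * z ^ n) w.

Definition is_root_of_unity_C (z : C) : Prop :=
  exists n : nat, (0 < n)%N /\ z ^+ n = 1.

Definition special (f : int -> C) : Prop :=
  exists (eta : C) (m : int), is_root_of_unity_C eta /\
    forall n : int, f n = if n == m then eta else 0.

End Padic.

(* The series converges on the unit circle, where its values [f(y)] satisfy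
   [f(y)^q = f(y^q)].  Averaging over roots of unity of order prime to [p] gives a
   maximum modulus principle, [max |f_n| <= sup |f(y)|]; combined with [|f(zeta)| = 1]
   and the functional equation this forces [max |f_n| = 1].

   Exactly one coefficient is a unit.  Otherwise let [L0 < M0] be the extreme unit
   indices: the polynomial [P] of the coefficients in between has its [d = M0 - L0]
   roots on the unit circle, and [|f(y)| < 1] exactly near them.  For a root [beta]
   the points [beta^(q^i)], [i <= d], also satisfy [|f| < 1], so two of them are close;
   this yields a root of unity [w] with [f(w)^(q^r) = f(w)] and [|f(w)| < 1], i.e.
   [f(w) = 0].  Then [f] vanishes at all [q^d]-th roots of [w], whereas the trace
   over them isolates the unit coefficient [f_L0].

   Finally write [f = f_m X^m + r] with [max |r_n| = delta < 1].  The binomial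
   expansion of [f(y)^q] shows that every coefficient of [f - f_m^q X^m], in
   particular the largest coefficient of [r], is at most
   [max (|p| delta, delta^p) < delta] unless [delta = 0].  Hence [f = f_m X^m] with
   [f_m^q = f_m]. *)

From HB Require Import structures.
From mathcomp Require Import all_boot all_order all_algebra zify ring lra.
From mathcomp Require Import reals closed_field separable cyclic.
From Stdlib Require ClassicalEpsilon FunctionalExtensionality Classical_Prop.
Import Order.TTheory GRing.Theory Num.Theory.
Local Open Scope ring_scope.
Set Implicit Arguments. Unset Strict Implicit. Unset Printing Implicit Defensive.

Section LaurentFrobenius.
Variables (R : realType) (C : fieldType) (abs : C -> R).
Hypothesis abs_ge0 : forall x, 0 <= abs x.
Hypothesis abs_eq0 : forall x, abs x = 0 <-> x = 0.
Hypothesis absM : forall x y, abs (x * y) = abs x * abs y.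
Hypothesis absD_max : forall x y, abs (x + y) <= Num.max (abs x) (abs y).

(** * Non-archimedean absolute values *)

Lemma abs0 : abs 0 = 0.
Proof. by apply/abs_eq0. Qed.

Lemma abs_gt0 x : x != 0 -> 0 < abs x.
Proof. by move=> x0; rewrite lt_def abs_ge0 andbT; apply: contra x0 => /eqP/abs_eq0->. Qed.

Lemma abs_eq1_neq0 x : abs x = 1 -> x != 0.
Proof.
by move=> x1; apply/eqP => x0; move: x1; rewrite x0 abs0 => /eqP; rewrite eq_sym oner_eq0.
Qed.

Lemma abs1 : abs 1 = 1.
Proof.
have nz : abs 1 != 0 by rewrite lt0r_neq0 // abs_gt0 ?oner_eq0.
by apply: (mulfI nz); rewrite -absM !mulr1.
Qed.

Lemma absN x : abs (- x) = abs x.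
Proof.
suff absN1 : abs (-1) = 1 by rewrite -mulN1r absM absN1 mul1r.
have : abs (-1) ^+ 2 == 1 by rewrite expr2 -absM mulrNN mulr1 abs1.
by rewrite sqrf_eq1 => /orP[/eqP //|/eqP h]; have := abs_ge0 (-1); rewrite h; lra.
Qed.

Lemma absBC x y : abs (x - y) = abs (y - x).
Proof. by rewrite -absN opprB. Qed.

Lemma absD_le x y B : abs x <= B -> abs y <= B -> abs (x + y) <= B.
Proof. by move=> hx hy; apply: le_trans (absD_max x y) _; rewrite ge_max hx hy. Qed.

Lemma absD_lt x y B : abs x < B -> abs y < B -> abs (x + y) < B.
Proof. by move=> hx hy; apply: le_lt_trans (absD_max x y) _; rewrite gt_max hx hy. Qed.

Lemma absB_le x y B : abs x <= B -> abs y <= B -> abs (x - y) <= B.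
Proof. by move=> hx hy; apply: absD_le; rewrite ?absN. Qed.

Lemma absB_lt x y B : abs x < B -> abs y < B -> abs (x - y) < B.
Proof. by move=> hx hy; apply: absD_lt; rewrite ?absN. Qed.

Lemma absD_eq_l x y : abs y < abs x -> abs (x + y) = abs x.
Proof.
move=> yx; apply/eqP; rewrite eq_le (absD_le (lexx _) (ltW yx)) /= leNgt.
by apply/negP => hlt; have := absB_lt hlt yx; rewrite addrK ltxx.
Qed.

Lemma abs_sum_le (I : Type) (s : seq I) (P : pred I) (F : I -> C) B :
  0 <= B -> (forall i, P i -> abs (F i) <= B) -> abs (\sum_(i <- s | P i) F i) <= B.
Proof.
move=> B0 hF; elim/big_rec: _ => [|i x Pi hx]; first by rewrite abs0.
exact: absD_le (hF _ Pi) hx.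
Qed.

Lemma abs_sum_lt (I : Type) (s : seq I) (P : pred I) (F : I -> C) B :
  0 < B -> (forall i, P i -> abs (F i) < B) -> abs (\sum_(i <- s | P i) F i) < B.
Proof.
move=> B0 hF; elim/big_rec: _ => [|i x Pi hx]; first by rewrite abs0.
exact: absD_lt (hF _ Pi) hx.
Qed.

Lemma absX x n : abs (x ^+ n) = abs x ^+ n.
Proof. by elim: n => [|n IH]; rewrite ?abs1 // !exprS absM IH. Qed.

Lemma absV x : abs x^-1 = (abs x)^-1.
Proof.
have [->|x0] := eqVneq x 0; first by rewrite invr0 abs0 invr0.
have ax0 := lt0r_neq0 (abs_gt0 x0).
by apply: (mulfI ax0); rewrite -absM !mulfV ?abs1.
Qed.

Lemma absXz1 x (n : int) : abs x = 1 -> abs (x ^ n) = 1.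
Proof. by move=> x1; case: n => n; rewrite /= ?absV absX x1 expr1n ?invr1. Qed.

Lemma abs_natr_le1 n : abs n%:R <= 1.
Proof. by elim: n => [|n IH]; rewrite ?abs0 // -addn1 natrD absD_le ?abs1. Qed.

Lemma abs_expr_eq1 x n : (0 < n)%N -> abs (x ^+ n) = 1 -> abs x = 1.
Proof. by move=> n0; rewrite absX => /eqP; rewrite pexpr_eq1 // => /eqP. Qed.

Lemma abs_unity_root x n : (0 < n)%N -> x ^+ n = 1 -> abs x = 1.
Proof. by move=> n0 xn; apply: (abs_expr_eq1 n0); rewrite xn abs1. Qed.

Lemma abs_subXX_le (y z : C) (n : int) : abs y = 1 -> abs z = 1 ->
  abs (y ^ n - z ^ n) <= abs (y - z).
Proof.
have subXX m : abs y = 1 -> abs z = 1 -> abs (y ^+ m - z ^+ m) <= abs (y - z).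
  move=> y1 z1; rewrite subrXX absM ler_piMr //.
  by apply: abs_sum_le => // i _; rewrite absM !absX y1 z1 !expr1n mulr1.
move=> y1 z1; case: n => n /=; first exact: subXX.
set Y := y ^+ n.+1; set Z := z ^+ n.+1.
have [Y0 Z0] : Y != 0 /\ Z != 0 by rewrite !expf_neq0 ?abs_eq1_neq0.
have -> : Y^-1 - Z^-1 = (Z - Y) * (Y^-1 * Z^-1) by field; rewrite Y0 Z0.
rewrite !absM !absV !absX y1 z1 !expr1n invr1 !mulr1 absBC; exact: subXX.
Qed.

(** * Sequences and two-sided sums *)

Local Notation cvg := (seq_cvg_to abs).

Lemma cvg_unique u l m : cvg u l -> cvg u m -> l = m.
Proof.
move=> hl hm; apply/eqP/negPn/negP => lm.
have lm0 : 0 < abs (l - m) by rewrite abs_gt0 // subr_eq0.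
have [N1 h1] := hl _ lm0; have [N2 h2] := hm _ lm0; set n := maxn N1 N2.
have : abs ((u n - m) - (u n - l)) < abs (l - m).
  by apply: absB_lt; [apply: h2 | apply: h1]; rewrite ?leq_maxl ?leq_maxr.
by rewrite opprB addrC addrA subrK ltxx.
Qed.

Lemma cvg_ext u v l : (forall n, u n = v n) -> cvg u l -> cvg v l.
Proof. by move=> e hu eps e0; have [N h] := hu _ e0; exists N => n /h; rewrite e. Qed.

Lemma cvg_const (c : C) : cvg (fun _ => c) c.
Proof. by move=> eps e0; exists 0%N => n _; rewrite subrr abs0. Qed.

Lemma cvgD u v l m : cvg u l -> cvg v m -> cvg (fun n => u n + v n) (l + m).
Proof.
move=> hu hv eps e0; have [N1 h1] := hu _ e0; have [N2 h2] := hv _ e0.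
exists (maxn N1 N2) => n; rewrite geq_max => /andP[n1 n2].
by rewrite opprD addrACA; apply: absD_lt; [apply: h1 | apply: h2].
Qed.

Lemma cvgMl (c : C) u l : cvg u l -> cvg (fun n => c * u n) (c * l).
Proof.
move=> hu eps e0; have c0 : 0 < abs c + 1 by have := abs_ge0 c; lra.
have [N h] := hu _ (divr_gt0 e0 c0); exists N => n /h hn.
rewrite -mulrBr absM; apply: le_lt_trans (ler_wpM2l (abs_ge0 c) (ltW hn)) _.
by rewrite mulrA ltr_pdivrMr //; have := abs_ge0 c; nra.
Qed.

Lemma cvgB u v l m : cvg u l -> cvg v m -> cvg (fun n => u n - v n) (l - m).
Proof.
move=> hu hv; have := cvgD hu (cvgMl (-1) hv); rewrite mulN1r.
by apply: cvg_ext => n; rewrite mulN1r.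
Qed.

Lemma cvg_sum (I : Type) (s : seq I) (U : I -> nat -> C) (L : I -> C) :
  (forall i, cvg (U i) (L i)) -> cvg (fun n => \sum_(i <- s) U i n) (\sum_(i <- s) L i).
Proof.
move=> hU; elim: s => [|i s IH].
  by rewrite big_nil; apply: cvg_ext (cvg_const 0) => n; rewrite big_nil.
by rewrite big_cons; apply: cvg_ext (cvgD (hU i) IH) => n; rewrite big_cons.
Qed.

Lemma cvg_abs_le u l N0 B :
  cvg u l -> (forall n, (N0 <= n)%N -> abs (u n) <= B) -> abs l <= B.
Proof.
move=> hl hB; rewrite leNgt; apply/negP => Bl.
have [N h] : exists N, forall n, (N <= n)%N -> abs (u n - l) < abs l - B.
  by apply: hl; rewrite subr_gt0.
have B0 := le_trans (abs_ge0 _) (hB _ (leqnn N0)); set n := maxn N N0.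
have : abs (u n - (u n - l)) < abs l.
  apply: absB_lt; first exact: le_lt_trans (hB _ (leq_maxr _ _)) Bl.
  by apply: lt_le_trans (h _ (leq_maxl _ _)) _; lra.
by rewrite subKr ltxx.
Qed.

Lemma cvg_abs_eq u l N0 A :
  0 < A -> cvg u l -> (forall n, (N0 <= n)%N -> abs (u n) = A) -> abs l = A.
Proof.
move=> A0 hl hA; apply/eqP; rewrite eq_le (cvg_abs_le (N0 := N0) hl) /=; last by move=> n /hA ->.
rewrite leNgt; apply/negP => lA; have [N h] := hl _ A0; set n := maxn N N0.
have : abs ((u n - l) + l) < A by apply: absD_lt => //; apply: h; rewrite leq_maxl.
by rewrite subrK hA ?leq_maxr // ltxx.
Qed.

Definition window (N : nat) : seq int := [seq i%:Z - N%:Z | i <- iota 0 N.*2.+1].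

Lemma mem_window n N : (n \in window N) = (`|n| <= N)%N.
Proof.
apply/mapP/idP => [[i]|nN]; first by rewrite mem_iota => /= ? ->; lia.
by exists (absz (n + N%:Z)); [rewrite mem_iota /=|]; lia.
Qed.

Lemma window_uniq N : uniq (window N).
Proof. by rewrite map_inj_uniq ?iota_uniq // => i j /addIr []. Qed.

Lemma big_window (F : int -> C) N :
  \sum_(0 <= k < N.*2.+1) F (k%:Z - N%:Z) = \sum_(n <- window N) F n.
Proof. by rewrite /index_iota subn0 big_map. Qed.

Lemma big_window_split (S : seq int) M (F : int -> C) : uniq S ->
  (forall n, (`|n| <= M)%N -> n \in S) ->
  \sum_(n <- S) F n = \sum_(n <- window M) F n + \sum_(n <- S | (M < `|n|)%N) F n.
Proof.
move=> uS MS; rewrite (bigID (fun n => `|n| <= M)%N) /=.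
congr (_ + _); last by apply: eq_bigl => n; rewrite ltnNge.
rewrite -big_filter; apply/perm_big/uniq_perm; rewrite ?filter_uniq ?window_uniq //.
by move=> n; rewrite mem_filter mem_window andb_idr // => /MS.
Qed.

Lemma big_window_widen (F : int -> C) M N : (M <= N)%N ->
  \sum_(n <- window N) F n =
    \sum_(n <- window M) F n + \sum_(n <- window N | (M < `|n|)%N) F n.
Proof.
by move=> MN; apply: big_window_split (window_uniq N) _ => n nM; rewrite mem_window (leq_trans nM).
Qed.

Lemma window_sum_tail (F : int -> C) l M B :
  cvg (fun N => \sum_(n <- window N) F n) l -> 0 <= B ->
  (forall n, (M < `|n|)%N -> abs (F n) <= B) ->
  abs (l - \sum_(n <- window M) F n) <= B.
Proof.
move=> hl B0 hB; apply: (cvg_abs_le (N0 := M) (cvgB hl (cvg_const _))) => N MN.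
by rewrite (big_window_widen _ MN) addrC addKr; apply: abs_sum_le.
Qed.

(** * Evaluation of Laurent series on the unit circle *)

Definition vanishes (a : int -> C) := forall eps, 0 < eps ->
  exists N : nat, forall n : int, (N < `|n|)%N -> abs (a n) < eps.

Definition psum (a : int -> C) (y : C) (N : nat) := \sum_(n <- window N) a n * y ^ n.

(* An arbitrary value when the partial sums diverge. *)
Definition ev (a : int -> C) (y : C) : C :=
  ClassicalEpsilon.epsilon (inhabits 0) (fun l => cvg (psum a y) l).

Lemma laurent_eval_toE a y l : laurent_eval_to abs a y l <-> cvg (psum a y) l.
Proof.
have e N : \sum_(0 <= k < N.*2.+1) a (k%:Z - N%:Z) * y ^ (k%:Z - N%:Z) = psum a y N.
  exact: (big_window (fun n => a n * y ^ n)).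
by split; apply: cvg_ext => N; rewrite e.
Qed.

Lemma psum_widen a y M N : (M <= N)%N ->
  psum a y N = psum a y M + \sum_(n <- window N | (M < `|n|)%N) a n * y ^ n.
Proof. exact: big_window_widen. Qed.

Lemma vanishes_le a b : vanishes a -> (forall n, abs (b n) <= abs (a n)) -> vanishes b.
Proof.
by move=> va ba eps /va [N hN]; exists N => n /hN; apply: le_lt_trans.
Qed.

Lemma vanishesB a b : vanishes a -> vanishes b -> vanishes (fun n => a n - b n).
Proof.
move=> va vb eps /[dup] /va [N1 h1] /vb [N2 h2].
by exists (maxn N1 N2) => n; rewrite gtn_max => /andP[/h1 ? /h2 ?]; apply: absB_lt.
Qed.

Lemma vanishes_finite a M : (forall n, (M < `|n|)%N -> a n = 0) -> vanishes a.
Proof. by move=> a0 eps e0; exists M => n /a0 ->; rewrite abs0. Qed.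

Lemma vanishes_monomial (m : int) c : vanishes (fun n => if n == m then c else 0).
Proof. by apply: (vanishes_finite (M := `|m|%N)) => n; case: eqP => // -> /[!ltnn]. Qed.

Lemma vanishes_bounded a : vanishes a -> exists2 B, 0 <= B & forall n, abs (a n) <= B.
Proof.
move=> /(_ 1 ltr01) [N hN]; set S := \sum_(k <- window N) abs (a k).
have S0 : 0 <= S by apply: sumr_ge0.
exists (1 + S) => [|n]; first lra.
have [nN|/hN] := leqP `|n| N; last lra.
have : 0 <= \sum_(i <- window N | i != n) abs (a i) by apply: sumr_ge0.
by rewrite /S (bigD1_seq n) ?window_uniq ?mem_window //=; lra.
Qed.

Hypothesis complete : forall u, cauchy_seq abs u -> exists l, cvg u l.

Lemma ev_cvg a y : vanishes a -> abs y = 1 -> cvg (psum a y) (ev a y).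
Proof.
move=> va y1; apply: ClassicalEpsilon.epsilon_spec; apply: complete => eps e0.
have [N hN] := va _ e0.
have tail m n : (N <= m)%N -> (m <= n)%N -> abs (psum a y m - psum a y n) < eps.
  move=> Nm mn; rewrite (psum_widen _ _ mn) opprD addrA subrr add0r absN.
  apply: abs_sum_lt => // k /(leq_ltn_trans Nm) /hN.
  by rewrite absM absXz1 ?mulr1.
exists N => m n Nm Nn; have [mn|/ltnW nm] := leqP m n; first exact: tail.
by rewrite absBC; apply: tail.
Qed.

Lemma ev_unique a y l : vanishes a -> abs y = 1 -> cvg (psum a y) l -> ev a y = l.
Proof. by move=> va y1; apply: cvg_unique (ev_cvg va y1). Qed.

Lemma ev_ext a b y : (forall n, a n = b n) -> ev a y = ev b y.
Proof. by move=> /FunctionalExtensionality.functional_extensionality ->. Qed.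

Lemma ev_le a y B : vanishes a -> abs y = 1 -> (forall n, abs (a n) <= B) ->
  abs (ev a y) <= B.
Proof.
move=> va y1 aB; apply: (cvg_abs_le (N0 := 0%N) (ev_cvg va y1)) => N _.
apply: abs_sum_le => [|n _]; first exact: le_trans (abs_ge0 _) (aB 0).
by rewrite absM absXz1 ?mulr1.
Qed.

Lemma ev_tail a y M B : vanishes a -> abs y = 1 -> 0 <= B ->
  (forall n, (M < `|n|)%N -> abs (a n) <= B) -> abs (ev a y - psum a y M) <= B.
Proof.
move=> va y1 B0 aB; apply: window_sum_tail (ev_cvg va y1) B0 _ => n /aB.
by rewrite absM absXz1 ?mulr1.
Qed.

Lemma evB a b y : vanishes a -> vanishes b -> abs y = 1 ->
  ev (fun n => a n - b n) y = ev a y - ev b y.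
Proof.
move=> va vb y1; apply: ev_unique => //; first exact: vanishesB.
apply: cvg_ext (cvgB (ev_cvg va y1) (ev_cvg vb y1)) => N.
by rewrite /psum -sumrB; apply: eq_bigr => n _; rewrite mulrBl.
Qed.

Lemma ev_finite a y M : abs y = 1 -> (forall n, (M < `|n|)%N -> a n = 0) ->
  ev a y = psum a y M.
Proof.
move=> y1 a0; apply: ev_unique => //; first exact: vanishes_finite a0.
move=> eps e0; exists M => N MN; rewrite (psum_widen _ _ MN) addrC addKr.
by rewrite big1 ?abs0 // => n /a0 ->; rewrite mul0r.
Qed.

Lemma ev_monomial (m : int) c y : abs y = 1 ->
  ev (fun n => if n == m then c else 0) y = c * y ^ m.
Proof.
move=> y1; rewrite (@ev_finite _ y `|m|%N y1); last by move=> n; case: eqP => // -> /[!ltnn].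
rewrite /psum (bigD1_seq m) ?window_uniq ?mem_window //= eqxx big1 ?addr0 // => n.
by move=> /negPf ->; rewrite mul0r.
Qed.

Lemma ev_lipschitz a y z : vanishes a -> abs y = 1 -> abs z = 1 ->
  (forall n, abs (a n) <= 1) -> abs (ev a y - ev a z) <= abs (y - z).
Proof.
move=> va y1 z1 a1.
apply: (cvg_abs_le (N0 := 0%N) (cvgB (ev_cvg va y1) (ev_cvg va z1))) => N _.
rewrite /psum -sumrB; apply: abs_sum_le => // n _; rewrite -mulrBr absM.
by rewrite -[X in _ <= X]mul1r ler_pM ?abs_subXX_le.
Qed.

(** * Products and powers of Laurent series *)

Lemma abs_mul_lt x z B e : 0 <= B -> 0 < e ->
  abs x <= B -> abs z <= e / (B + 1) -> abs (x * z) < e.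
Proof.
move=> B0 e0 xB ze; rewrite absM; apply: le_lt_trans (ler_pM _ _ xB ze) _ => //.
by rewrite mulrA ltr_pdivrMr ?mulrDr ?mulr1; lra.
Qed.

Lemma vanishes_mul_lt g B e : vanishes g -> 0 <= B -> 0 < e ->
  exists N : nat, forall k x, (N < `|k|)%N -> abs x <= B -> abs (g k * x) < e.
Proof.
move=> vg B0 e0; have B1 : 0 < B + 1 by lra.
have [N gN] := vg _ (divr_gt0 e0 B1).
by exists N => k x /gN/ltW gk xB; rewrite mulrC (abs_mul_lt B0 e0 xB gk).
Qed.

Lemma laurent_mul_toE g h r n : laurent_mul_to abs g h r ->
  cvg (fun K => \sum_(k <- window K) g k * h (n - k)) (r n).
Proof. by move=> /(_ n); apply: cvg_ext => K; rewrite (big_window (fun k => g k * h (n - k))). Qed.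

Lemma laurent_mul_vanishes g h r : vanishes g -> vanishes h ->
  laurent_mul_to abs g h r -> vanishes r.
Proof.
move=> vg vh ghr eps e0; have e20 : 0 < eps / 2 by lra.
have [Bg Bg0 gB] := vanishes_bounded vg; have [Bh Bh0 hB] := vanishes_bounded vh.
have [Ng hg] := vanishes_mul_lt vg Bh0 e20.
have Bg1 : 0 < Bg + 1 by lra.
have [Nh hh] := vh _ (divr_gt0 e20 Bg1).
exists (Ng + Nh)%N => n nN; apply: (@le_lt_trans _ _ (eps / 2)); last lra.
apply: (cvg_abs_le (N0 := 0%N) (laurent_mul_toE n ghr)) => K _.
apply: abs_sum_le => [|k _]; first lra.
have [kN|/hg gk] := leqP `|k| Ng; last exact/ltW/gk/hB.
have /hh/ltW hk : (Nh < `|n - k|)%N by lia.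
exact/ltW/(abs_mul_lt Bg0 e20 (gB k) hk).
Qed.

Lemma big_conv_exchange (W : seq int) (g h : int -> C) (y : C) : y \is a GRing.unit ->
  \sum_(n <- W) (\sum_(k <- W) g k * h (n - k)) * y ^ n =
  \sum_(k <- W) g k * y ^ k * \sum_(n <- W) h (n - k) * y ^ (n - k).
Proof.
move=> yu; under eq_bigr do rewrite mulr_suml.
rewrite exchange_big /=; apply: eq_bigr => k _; rewrite mulr_sumr.
apply: eq_bigr => n _; have -> : y ^ n = y ^ k * y ^ (n - k) by rewrite -exprzDr // subrKC.
by rewrite mulrACA mulrA.
Qed.

Lemma psum_shift_near h y k M N e : vanishes h -> abs y = 1 -> 0 <= e ->
  (forall j, (M < `|j|)%N -> abs (h j) <= e) -> (`|k| + M <= N)%N ->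
  abs (\sum_(n <- window N) h (n - k) * y ^ (n - k) - ev h y) <= e.
Proof.
move=> vh y1 e0 hM kMN.
rewrite -(big_map (fun n => n - k) predT (fun j => h j * y ^ j)).
rewrite (@big_window_split _ M); first last.
- by move=> j jM; apply/mapP; exists (j + k); rewrite ?addrK // mem_window; lia.
- by rewrite map_inj_uniq ?window_uniq // => a b /addIr.
set T := \sum_(_ <- _ | (M < _)%N) _.
rewrite -/(psum h y M).
have -> : psum h y M + T - ev h y = T - (ev h y - psum h y M) by ring.
apply: absB_le; first by apply: abs_sum_le => // j /hM; rewrite absM absXz1 ?mulr1.
exact: ev_tail.
Qed.

Lemma ev_laurent_mul g h r y : vanishes g -> vanishes h -> abs y = 1 ->
  laurent_mul_to abs g h r -> ev r y = ev g y * ev h y.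
Proof.
move=> vg vh y1 ghr; have vr := laurent_mul_vanishes vg vh ghr.
have yu : y \is a GRing.unit by rewrite unitfE abs_eq1_neq0.
set H := ev h y; apply: ev_unique => //.
suff D0 : cvg (fun N => psum r y N - psum g y N * H) 0.
  rewrite -[_ * H]add0r mulrC; apply: cvg_ext (cvgD D0 (cvgMl H (ev_cvg vg y1))) => N.
  by rewrite mulrC subrK.
move=> eps e0; have e20 : 0 < eps / 2 by lra.
have [Bg Bg0 gB] := vanishes_bounded vg; have [Bh Bh0 hB] := vanishes_bounded vh.
have [Ng hg] := vanishes_mul_lt vg Bh0 e20.
have Bg1 : 0 < Bg + 1 by lra.
have [Nh hh] := vh _ (divr_gt0 e20 Bg1).
exists (Ng + Nh)%N => N NN; rewrite subr0.
set I := fun k => \sum_(n <- window N) h (n - k) * y ^ (n - k).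
(* The error splits into the truncation errors of the convolutions [r n] and the
   errors of the shifted partial sums [I k] of [h]. *)
have -> : psum r y N - psum g y N * H =
    \sum_(n <- window N) (r n - \sum_(k <- window N) g k * h (n - k)) * y ^ n +
    \sum_(k <- window N) g k * y ^ k * (I k - H).
  have e1 : \sum_(k <- window N) g k * y ^ k * (I k - H) =
      \sum_(k <- window N) g k * y ^ k * I k - psum g y N * H.
    by rewrite /psum mulr_suml -sumrB; apply: eq_bigr => k _; rewrite mulrBr.
  have e2 : \sum_(n <- window N) (r n - \sum_(k <- window N) g k * h (n - k)) * y ^ n =
      psum r y N - \sum_(k <- window N) g k * y ^ k * I k.
    by rewrite -big_conv_exchange // /psum -sumrB; apply: eq_bigr => n _; rewrite mulrBl.
  by rewrite e1 e2 addrA subrK.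
apply: le_lt_trans (_ : eps / 2 < eps); last lra.
apply: absD_le.
  apply: abs_sum_le => [|n _]; first lra.
  rewrite absM absXz1 // mulr1.
  apply: window_sum_tail (laurent_mul_toE n ghr) _ _ => [|k kN]; first lra.
  by apply/ltW/hg/hB; lia.
apply: abs_sum_le => [|k _]; first lra.
rewrite -mulrA mulrCA absM absXz1 // mul1r.
have [kN|/hg gk] := leqP `|k| Ng; last first.
  apply/ltW/gk/absB_le; last exact: ev_le.
  by apply: abs_sum_le => // n _; rewrite absM absXz1 ?mulr1.
apply/ltW/(abs_mul_lt Bg0 e20 (gB k)).
by apply: (psum_shift_near (M := Nh) vh y1 (ltW (divr_gt0 e20 Bg1))) => [j /hh/ltW //|]; lia.
Qed.

Lemma ev_laurent_pow f k s y : vanishes f -> abs y = 1 -> laurent_pow_to abs f k s ->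
  vanishes s /\ ev s y = ev f y ^+ k.
Proof.
move=> vf y1; elim: k s => [|k IH] s /=.
  move=> s1; have -> : s = fun n => if n == 0 then 1 else 0.
    by apply: FunctionalExtensionality.functional_extensionality => n; rewrite s1; case: eqP.
  by rewrite ev_monomial // mul1r expr0z; split; first exact: vanishes_monomial.
move=> [s' [/IH [vs' es'] s'fs]]; split; first exact: laurent_mul_vanishes s'fs.
by rewrite (ev_laurent_mul vs' vf y1 s'fs) es' exprSr.
Qed.

Lemma psum0 a y : psum a y 0 = a 0.
Proof. by rewrite /psum /window /= big_seq1 expr0z mulr1. Qed.

Lemma psumS a y N : psum a y N.+1 =
  psum a y N + (a N.+1%:Z * y ^ N.+1%:Z + a (- N.+1%:Z) * y ^ (- N.+1%:Z)).
Proof.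
rewrite (psum_widen _ _ (leqnSn N)) -big_filter; congr (_ + _).
have pe : perm_eq [seq n <- window N.+1 | (N < `|n|)%N] [:: N.+1%:Z; - N.+1%:Z].
  apply: uniq_perm; rewrite ?filter_uniq ?window_uniq // => n.
  rewrite mem_filter mem_window !inE; apply/andP/orP.
    by case=> Nn nN; have [n0|n0] := ltrP 0 n; [left|right]; apply/eqP; lia.
  by case=> /eqP ->; split; lia.
by rewrite (perm_big _ pe) big_cons big_seq1.
Qed.

Lemma psum_subst_pow f y q N : (0 < q)%N ->
  psum (laurent_subst_pow q f) y N = psum f (y ^+ q) (N %/ q).
Proof.
move=> q0; have qz0 : q%:Z != 0 by rewrite eqz_nat -lt0n.
have term t : laurent_subst_pow q f (q%:Z * t) * y ^ (q%:Z * t) = f t * (y ^+ q) ^ t.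
  by rewrite /laurent_subst_pow dvdz_mulr ?dvdzz // mulKz // -exprz_exp.
have off n : ~~ (q%:Z %| n)%Z -> laurent_subst_pow q f n * y ^ n = 0.
  by rewrite /laurent_subst_pow => /negPf ->; rewrite mul0r.
elim: N => [|N IH]; first by rewrite div0n !psum0 /laurent_subst_pow dvdz0 div0z.
rewrite psumS IH divnS //; have [qN|qN] /= := boolP (q %| N.+1)%N; last first.
  by rewrite add0n !off ?addr0 // dvdzE ?abszN.
have [t Nt] := dvdnP qN.
have tE : t = (N %/ q).+1 by have := divnS N q0; rewrite qN Nt mulnK.
rewrite add1n psumS -tE; congr (_ + _).
have -> : N.+1%:Z = q%:Z * t%:Z by rewrite Nt PoszM mulrC.
by rewrite -mulrN !term.
Qed.

Lemma ev_frobenius f q y : vanishes f -> abs y = 1 -> (0 < q)%N ->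
  laurent_pow_to abs f q (laurent_subst_pow q f) -> ev f y ^+ q = ev f (y ^+ q).
Proof.
move=> vf y1 q0 fq; have [vs <-] := ev_laurent_pow vf y1 fq.
have yq1 : abs (y ^+ q) = 1 by rewrite absX y1 expr1n.
apply: ev_unique => // eps /(ev_cvg vf yq1) [N hN].
by exists (N * q)%N => n Nn; rewrite psum_subst_pow // hN // leq_divRL.
Qed.

Lemma ev_frobenius_iter f q y n : vanishes f -> abs y = 1 -> (0 < q)%N ->
  laurent_pow_to abs f q (laurent_subst_pow q f) ->
  ev f y ^+ (q ^ n) = ev f (y ^+ (q ^ n)).
Proof.
move=> vf + q0 fq; elim: n y => [|n IH] y y1; first by rewrite !expr1.
by rewrite expnS !exprM ev_frobenius // IH // absX y1 expr1n.
Qed.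

(** * Roots of unity and the trace over a coset of roots of unity *)

Hypothesis closedC : GRing.closed_field_axiom C.

Definition C_closed : Type := C.
HB.instance Definition _ := GRing.Field.on C_closed.
HB.instance Definition _ := Field_isAlgClosed.Build C_closed closedC.

Lemma poly_split (P : {poly C}) :
  exists rs : seq C, P = lead_coef P *: \prod_(z <- rs) ('X - z%:P).
Proof. by have [rs rsE] := @closed_field_poly_normal C_closed P; exists rs. Qed.

Lemma exists_nth_root (n : nat) (c : C) : (0 < n)%N -> exists y, y ^+ n = c.
Proof.
case: n => // n _; have [x xE] := closedC (fun i => if i == 0%N then c else 0) (ltn0Sn n).
by exists x; rewrite xE big_ord_recl big1 ?addr0 ?expr0 ?mulr1 // => i _; rewrite mul0r.
Qed.

Lemma exists_prim_root (Q : nat) : (0 < Q)%N -> (Q%:R : C) != 0 ->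
  exists xi : C, Q.-primitive_root xi.
Proof.
move=> Q0 QR; have [rs rsE] := poly_split ('X^Q - 1).
have lc : lead_coef ('X^Q - 1 : {poly C}) = 1 by rewrite -polyC1 lead_coefXnsubC.
rewrite lc scale1r in rsE.
have sz_rs : size rs = Q.
  have : size ('X^Q - 1%:P : {poly C}) = Q.+1 by rewrite size_XnsubC.
  by rewrite polyC1 rsE size_prod_XsubC => -[].
have uniq_rs : uniq rs.
  rewrite -separable_prod_XsubC -rsE unlock; apply/Bezout_coprimepP.
  exists (- 1, Q%:R^-1 *: 'X); rewrite derivB derivXn derivC subr0 /=.
  rewrite -scalerAl mulrnAr -exprS prednK // -scaler_nat scalerA mulVf // scale1r.
  by rewrite mulN1r opprB subrK eqpxx.
have unity_rs : all Q.-unity_root rs.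
  apply/allP => z; rewrite unity_rootE -root_prod_XsubC -rsE.
  by rewrite rootE !hornerE subr_eq0.
have /hasP[xi _ ?] := has_prim_root Q0 unity_rs uniq_rs (eq_leq (esym sz_rs)).
by exists xi.
Qed.

Lemma sum_prim_root_exprz (Q : nat) (xi : C) (k : int) : Q.-primitive_root xi ->
  \sum_(i < Q) (xi ^+ i) ^ k = if (Q%:Z %| k)%Z then Q%:R else 0.
Proof.
move=> xiQ; have xiQ1 : xi ^ Q%:Z = 1 := prim_expr_order xiQ.
have z1 : ~~ (Q%:Z %| k)%Z -> xi ^ k != 1.
  apply: contra; rewrite dvdzE (prim_order_dvd xiQ); case: k => n //=.
  by move=> /eqP/(congr1 GRing.inv); rewrite invrK invr1 => ->.
set z := xi ^ k in z1 *.
have e i : (xi ^+ i) ^ k = z ^+ i by rewrite (_ : xi ^+ i = xi ^ i%:Z) // exprzAC.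
under eq_bigr do rewrite e.
have zQ : z ^+ Q = 1 by rewrite (_ : z ^+ Q = z ^ Q%:Z) // exprzAC xiQ1 exp1rz.
case: ifPn => [/dvdzP[t kE] | /z1 {}z1].
  have -> : z = 1 by rewrite /z kE -exprz_exp exprzAC xiQ1 exp1rz.
  by under eq_bigr do rewrite expr1n; rewrite sumr_const card_ord.
have : (z - 1) * \sum_(i < Q) z ^+ i = 0 by rewrite -subrX1 zQ subrr.
by move/eqP; rewrite mulf_eq0 subr_eq0 (negPf z1) => /eqP.
Qed.

Lemma trace_psum g y0 xi Q j N : y0 \is a GRing.unit -> Q.-primitive_root xi ->
  \sum_(i < Q) psum g (y0 * xi ^+ i) N * (y0 * xi ^+ i) ^ (- j) =
  Q%:R * \sum_(n <- window N | (Q%:Z %| n - j)%Z) g n * y0 ^ (n - j).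
Proof.
move=> y0u xiQ.
have xiu : xi \is a GRing.unit.
  by rewrite unitfE abs_eq1_neq0 // (abs_unity_root (prim_order_gt0 xiQ) (prim_expr_order xiQ)).
rewrite /psum; under eq_bigr do rewrite mulr_suml.
rewrite exchange_big /= mulr_sumr [RHS]big_mkcond; apply: eq_bigr => n _.
have -> : \sum_(i < Q) g n * (y0 * xi ^+ i) ^ n * (y0 * xi ^+ i) ^ (- j) =
    g n * y0 ^ (n - j) * \sum_(i < Q) (xi ^+ i) ^ (n - j).
  rewrite mulr_sumr; apply: eq_bigr => i _.
  have yiu : y0 * xi ^+ i \is a GRing.unit by rewrite unitrM y0u unitrX.
  by rewrite -mulrA -exprzDr // exprzMl ?unitrX // mulrA.
by rewrite sum_prim_root_exprz //; case: ifP => _; [exact: mulrC | exact: mulr0].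
Qed.

(* Averaging over the coset [y0 mu_Q] keeps exactly the coefficients [g n] with
   [n = j %[mod Q]], among which [g j] dominates. *)
Lemma abs_trace_ev g y0 xi Q j : vanishes g -> abs y0 = 1 ->
  Q.-primitive_root xi -> (Q%:R : C) != 0 -> g j != 0 ->
  (forall n, n != j -> (Q%:Z %| n - j)%Z -> abs (g n) < abs (g j)) ->
  abs (\sum_(i < Q) ev g (y0 * xi ^+ i) * (y0 * xi ^+ i) ^ (- j)) =
    abs (Q%:R : C) * abs (g j).
Proof.
move=> vg y01 xiQ QR gj0 iso.
have xi1 := abs_unity_root (prim_order_gt0 xiQ) (prim_expr_order xiQ).
have yi1 i : abs (y0 * xi ^+ i) = 1 by rewrite absM absX xi1 expr1n y01 mulr1.
have hc : cvg (fun N => \sum_(i < Q) psum g (y0 * xi ^+ i) N * (y0 * xi ^+ i) ^ (- j))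
    (\sum_(i < Q) ev g (y0 * xi ^+ i) * (y0 * xi ^+ i) ^ (- j)).
  apply: cvg_sum => i; have := cvgMl ((y0 * xi ^+ i) ^ (- j)) (ev_cvg vg (yi1 i)).
  by rewrite [_ * ev _ _]mulrC; apply: cvg_ext => N; exact: mulrC.
apply: (cvg_abs_eq (N0 := `|j|%N) _ hc); first by rewrite mulr_gt0 ?abs_gt0.
move=> N jN; rewrite trace_psum ?unitfE ?abs_eq1_neq0 // absM; congr (_ * _).
rewrite -big_filter (bigD1_seq j) ?filter_uniq ?window_uniq //; last first.
  by rewrite mem_filter subrr dvdz0 mem_window.
rewrite subrr expr0z mulr1 absD_eq_l // big_seq_cond; apply: abs_sum_lt; first exact: abs_gt0.
move=> n /andP[]; rewrite mem_filter => /andP[Qn _] nj.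
by rewrite absM absXz1 ?mulr1 // iso.
Qed.

Lemma seq_argmax (phi : int -> R) (s : seq int) : s != [::] ->
  exists2 j, j \in s & forall n, n \in s -> phi n <= phi j.
Proof.
elim: s => [//|x s IH] _; have [->|s0] := eqVneq s [::].
  by exists x => [|n]; rewrite ?mem_seq1 // => /eqP ->.
have [j js jmax] := IH s0; have [xj|jx] := leP (phi x) (phi j).
  exists j => [|n]; first by rewrite inE js orbT.
  by rewrite inE => /orP[/eqP ->|/jmax].
exists x => [|n]; first exact: mem_head.
by rewrite inE => /orP[/eqP -> //|/jmax/le_trans]; apply; apply: ltW.
Qed.

Lemma vanishes_argmax g : vanishes g -> exists j, forall n, abs (g n) <= abs (g j).
Proof.
move=> vg; have [[n0 gn0]|g0] := Classical_Prop.classic (exists n0, g n0 != 0); last first.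
  exists 0 => n; have -> : g n = 0 by apply/eqP/negPn/negP => gn; apply: g0; exists n.
  by rewrite abs0.
have [K gK] := vg _ (abs_gt0 gn0).
have n0K : (`|n0| <= K)%N by rewrite leqNgt; apply/negP => /gK; rewrite ltxx.
have [|j _ jmax] := @seq_argmax (fun n => abs (g n)) (window K).
  by apply/eqP => e; have := mem_window n0 K; rewrite e n0K.
exists j => n; have [nK|/gK /ltW] := leqP `|n| K; first by rewrite jmax ?mem_window.
by move/le_trans; apply; rewrite jmax ?mem_window.
Qed.

(** * Maximum modulus principle *)

Variable p : nat.
Hypothesis p_prime : prime p.
Hypothesis abs_p : abs p%:R = (p%:R)^-1.

Lemma abs_p_lt1 : abs (p%:R : C) < 1.
Proof. by rewrite abs_p invf_lt1 ?ltr1n ?ltr0n ?prime_gt0 ?prime_gt1. Qed.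

Lemma abs_1_plus_p m : abs ((1 + p * m)%N%:R : C) = 1.
Proof.
rewrite natrD natrM -[RHS]abs1 absD_eq_l // abs1 absM.
by apply: le_lt_trans abs_p_lt1; rewrite ler_piMr ?abs_natr_le1.
Qed.

Lemma ev_ge_max_coef g j : vanishes g -> (forall n, abs (g n) <= abs (g j)) ->
  exists2 y, abs y = 1 & abs (g j) <= abs (ev g y).
Proof.
move=> vg jmax; have [->|gj0] := eqVneq (g j) 0; first by exists 1; rewrite ?abs1 ?abs0.
have [K gK] := vg _ (abs_gt0 gj0).
have jK : (`|j| <= K)%N by rewrite leqNgt; apply/negP => /gK; rewrite ltxx.
(* [|Q| = 1], so [Q] is invertible and the trace does not shrink [g j]; [Q > 2K]
   isolates [j] among the indices congruent to it. *)
pose Q := (1 + p * K.*2.+1)%N.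
have Q1 : abs (Q%:R : C) = 1 := abs_1_plus_p _.
have QR : (Q%:R : C) != 0 by rewrite abs_eq1_neq0.
have [xi xiQ] := exists_prim_root (ltn0Sn _) QR.
have xi1 := abs_unity_root (prim_order_gt0 xiQ) (prim_expr_order xiQ).
have iso n : n != j -> (Q%:Z %| n - j)%Z -> abs (g n) < abs (g j).
  move=> nj; rewrite dvdzE => /(dvdn_leq _) Qn; apply: gK.
  have : (K.*2.+1 < Q)%N by have := prime_gt1 p_prime; rewrite /Q; nia.
  by move: Qn; rewrite absz_gt0 subr_eq0 nj => /(_ isT); lia.
have := abs_trace_ev vg abs1 xiQ QR gj0 iso; rewrite Q1 mul1r => tr.
pose big_at i := abs (g j) <= abs (ev g (xi ^+ i)).
have [/existsP[i gi]|/existsPn small] := boolP [exists i : 'I_Q, big_at i].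
  by exists (xi ^+ i); rewrite ?absX ?xi1 ?expr1n.
have : abs (g j) < abs (g j).
  rewrite -{1}tr; apply: abs_sum_lt => [|i _]; first exact: abs_gt0.
  by rewrite mul1r absM absXz1 ?absX ?xi1 ?expr1n // mulr1 ltNge small.
by rewrite ltxx.
Qed.

(** * A Laurent series with a unique unit coefficient is a monomial *)

(* Bounds [|(1 + x)^p - 1|] for [|x| <= t], since [p] divides the inner binomial
   coefficients. *)
Definition frob_contr (t : R) := Num.max (abs (p%:R : C) * t) (t ^+ p).

Lemma frob_contr_ge0 t : 0 <= t -> 0 <= frob_contr t.
Proof. by move=> t0; rewrite le_max exprn_ge0 ?orbT. Qed.

Lemma frob_contr_le t : 0 <= t -> t <= 1 -> frob_contr t <= t.
Proof.
move=> t0 t1; rewrite ge_max ler_piMl ?(ltW abs_p_lt1) //=.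
by rewrite ler_iXnr // prime_gt0.
Qed.

Lemma frob_contr_lt t : 0 < t -> t < 1 -> frob_contr t < t.
Proof.
move=> t0 t1; rewrite gt_max ltr_iXnr ?prime_gt1 // andbT.
by rewrite gtr_pMl // abs_p_lt1.
Qed.

Lemma abs_expr_p_sub1 x t : abs x <= t -> t <= 1 -> abs ((1 + x) ^+ p - 1) <= frob_contr t.
Proof.
move=> xt t1; have t0 := le_trans (abs_ge0 x) xt.
rewrite [1 + x]addrC exprD1n big_ord_recl /= expr0 bin0 mulr1n addrC addKr.
apply: abs_sum_le => [|i _]; first exact: frob_contr_ge0.
rewrite /bump /= add1n -mulr_natl absM absX.
case: (ltngtP i.+1 p) => ip; last 2 first.
- by move: (ltn_ord i); lia.
- by rewrite ip binn abs1 mul1r le_max lerXn2r ?nnegrE ?orbT.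
have [c ->] := dvdnP (prime_dvd_bin p_prime (ip : 0 < i.+1 < p)%N).
rewrite natrM absM -mulrA mulrC le_max; apply/orP; left.
rewrite -mulrA ler_wpM2l ?abs_ge0 // -[t]mulr1.
apply: ler_pM; rewrite ?exprn_ge0 ?abs_ge0 ?abs_natr_le1 //.
by apply: (le_trans _ xt); apply: ler_iXnr => //; apply: le_trans xt t1.
Qed.

Lemma abs_expr_q_sub1 x t k : (0 < k)%N -> abs x <= t -> t <= 1 ->
  abs ((1 + x) ^+ (p ^ k) - 1) <= frob_contr t.
Proof.
move=> + xt t1; have t0 := le_trans (abs_ge0 x) xt; have ft := frob_contr_le t0 t1.
elim: k => [//|[_|k IH]] _; first by rewrite expn1 abs_expr_p_sub1.
rewrite expnS mulnC exprM.
have -> : (1 + x) ^+ (p ^ k.+1) = 1 + ((1 + x) ^+ (p ^ k.+1) - 1) by rewrite [RHS]addrC subrK.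
apply: le_trans (abs_expr_p_sub1 (IH isT) (le_trans ft t1)) _.
by apply: frob_contr_le (frob_contr_ge0 t0) (le_trans ft t1).
Qed.

Lemma ev_sub_monomial f m c y : vanishes f -> abs y = 1 ->
  ev (fun n => f n - (if n == m then c else 0)) y = ev f y - c * y ^ m.
Proof. by move=> vf y1; rewrite evB ?ev_monomial //; exact: vanishes_monomial. Qed.

Lemma ev_frob_defect_le f q k m delta : vanishes f -> (0 < k)%N -> q = (p ^ k)%N ->
  (forall y, abs y = 1 -> ev f y ^+ q = ev f (y ^+ q)) -> abs (f m) = 1 ->
  0 <= delta -> delta <= 1 -> (forall n, n != m -> abs (f n) <= delta) ->
  forall z, abs z = 1 -> abs (ev f z - f m ^+ q * z ^ m) <= frob_contr delta.
Proof.
move=> vf k0 qE frob fm1 d0 d1 fd z z1.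
have q0 : (0 < q)%N by rewrite qE expn_gt0 prime_gt0.
have [y yz] := exists_nth_root z q0.
have y1 : abs y = 1 by apply: (abs_expr_eq1 q0); rewrite yz.
set r := fun n => f n - (if n == m then f m else 0).
have rd n : abs (r n) <= delta.
  by rewrite /r; case: eqP => [->|/eqP /fd]; rewrite ?subrr ?abs0 ?subr0.
set u := f m * y ^ m; have u1 : abs u = 1 by rewrite absM fm1 absXz1 ?mul1r.
set x := ev r y / u; have xd : abs x <= delta.
  by rewrite absM absV u1 invr1 mulr1 ev_le //; apply: vanishesB vf (vanishes_monomial _ _).
have fy : ev f y = u * (1 + x).
  by rewrite mulrDr mulr1 mulrCA divff ?abs_eq1_neq0 // mulr1 ev_sub_monomial // subrKC.
have uq : u ^+ q = f m ^+ q * z ^ m.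
  by rewrite exprMn -yz (_ : (y ^ m) ^+ q = (y ^ m) ^ q%:Z) // exprzAC.
rewrite -{1}yz -frob // fy exprMn uq -[X in _ - X]mulr1 -mulrBr.
by rewrite !absM absX fm1 expr1n absXz1 // !mul1r qE abs_expr_q_sub1.
Qed.

Lemma coef_eq0_off_unit f q k m : vanishes f -> (0 < k)%N -> q = (p ^ k)%N ->
  (forall y, abs y = 1 -> ev f y ^+ q = ev f (y ^+ q)) ->
  (forall n, abs (f n) <= 1) -> abs (f m) = 1 -> (forall n, abs (f n) = 1 -> n = m) ->
  forall n, n != m -> f n = 0.
Proof.
move=> vf k0 qE frob f1 fm1 um.
pose r n := if n == m then 0 else f n.
have vr : vanishes r by apply: (vanishes_le vf) => n; rewrite /r; case: eqP; rewrite ?abs0.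
have [j0 j0max] := vanishes_argmax vr; set delta := abs (r j0).
have rd n : n != m -> abs (f n) <= delta by move=> nm; have := j0max n; rewrite /r (negPf nm).
have d1 : delta < 1.
  rewrite /delta /r; case: eqP => [_|/eqP j0m]; first by rewrite abs0 ltr01.
  by rewrite lt_neqAle f1 andbT; apply: contra j0m => /eqP/um ->.
suff d0 : delta = 0.
  by move=> n /rd; rewrite d0 => fn0; apply/abs_eq0/eqP; rewrite eq_le fn0 abs_ge0.
apply/eqP; rewrite eq_le abs_ge0 andbT leNgt; apply/negP => dpos.
have j0m : j0 != m by apply: contraTneq dpos => e; rewrite /delta /r e eqxx abs0 ltxx.
pose s n := f n - (if n == m then f m ^+ q else 0).
have vs : vanishes s by apply: vanishesB vf (vanishes_monomial _ _).
have [j jmax] := vanishes_argmax vs; have [y y1 sy] := ev_ge_max_coef vs jmax.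
have : delta <= frob_contr delta.
  have sj0 : s j0 = f j0 by rewrite /s (negPf j0m) subr0.
  rewrite {1}/delta /r (negPf j0m) -sj0.
  apply: le_trans (jmax j0) (le_trans sy _); rewrite /s ev_sub_monomial //.
  by apply: (ev_frob_defect_le vf k0 qE frob fm1 (ltW dpos) (ltW d1) rd).
by rewrite leNgt frob_contr_lt.
Qed.

Lemma special_of_unique_unit_coef f q k m : vanishes f -> (0 < k)%N -> q = (p ^ k)%N ->
  (forall y, abs y = 1 -> ev f y ^+ q = ev f (y ^+ q)) ->
  (forall n, abs (f n) <= 1) -> abs (f m) = 1 -> (forall n, abs (f n) = 1 -> n = m) ->
  special f.
Proof.
move=> vf k0 qE frob f1 fm1 um.
have fE n : f n = if n == m then f m else 0.
  by case: eqP => [-> // | /eqP]; apply: (coef_eq0_off_unit vf k0 qE frob f1 fm1 um).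
have ev1 : ev f 1 = f m by rewrite (ev_ext _ fE) ev_monomial ?abs1 // exp1rz mulr1.
have q1 : (1 < q)%N.
  rewrite qE; apply: leq_trans (prime_gt1 p_prime) _; rewrite -{1}(expn1 p).
  exact: leq_pexp2l (prime_gt0 p_prime) k0.
have q0 := ltnW q1; exists (f m), m; split => //; exists q.-1.
split; first by rewrite -ltnS prednK.
apply: (mulfI (abs_eq1_neq0 fm1)); rewrite -exprS prednK // mulr1.
by have := frob 1 abs1; rewrite expr1n ev1.
Qed.

(** * Uniqueness of the unit coefficient *)

Lemma exists_extreme_unit_coefs f L : vanishes f -> abs (f L) = 1 ->
  exists L0 M0, [/\ abs (f L0) = 1, abs (f M0) = 1 &
    forall n, abs (f n) = 1 -> L0 <= n <= M0].
Proof.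
move=> vf fL1; have [K fK] := vf 1 ltr01.
pose D := [seq n <- window K | abs (f n) == 1].
have memD n : abs (f n) = 1 -> n \in D.
  move=> fn1; rewrite mem_filter fn1 eqxx mem_window leqNgt; apply/negP => /fK.
  by rewrite fn1 ltxx.
have D0 : D != [::] by apply/eqP => D0; have := memD _ fL1; rewrite D0.
have [L0 L0D L0min] := seq_argmax (fun n => - (n%:~R : R)) D0.
have [M0 M0D M0max] := seq_argmax (fun n => n%:~R : R) D0.
have inD n : n \in D -> abs (f n) = 1 by rewrite mem_filter => /andP[/eqP].
exists L0, M0; split; rewrite ?inD // => n /memD nD.
by have := L0min _ nD; have := M0max _ nD; rewrite lerN2 !ler_int => -> ->.
Qed.

Definition laurent_window_poly (f : int -> C) (L : int) (d : nat) : {poly C} :=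
  \poly_(i < d.+1) f (L + i%:Z).

Definition laurent_outside (f : int -> C) (L : int) (d : nat) (n : int) : C :=
  if (L <= n) && (n <= L + d%:Z) then 0 else f n.

Lemma ev_window_split f L d y : vanishes f -> abs y = 1 ->
  ev f y = y ^ L * (laurent_window_poly f L d).[y] + ev (laurent_outside f L d) y.
Proof.
move=> vf y1; have yu : y \is a GRing.unit by rewrite unitfE abs_eq1_neq0.
have vo : vanishes (laurent_outside f L d).
  by apply: (vanishes_le vf) => n; rewrite /laurent_outside; case: ifP; rewrite ?abs0.
apply/eqP; rewrite -subr_eq -evB //; apply/eqP.
rewrite (@ev_finite _ _ (`|L| + d)%N) // => [|n nLd]; last first.
  by rewrite /laurent_outside; case: ifP => [/andP[]|]; [lia | rewrite subrr].
rewrite /psum (bigID (fun n => (L <= n) && (n <= L + d%:Z))) /= [X in _ + X]big1 ?addr0; last first.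
  by move=> n /negPf nLd; rewrite /laurent_outside nLd subrr mul0r.
rewrite -big_filter (perm_big [seq L + i%:Z | i <- iota 0 d.+1]); last first.
  apply: uniq_perm; rewrite ?filter_uniq ?window_uniq ?map_inj_uniq ?iota_uniq //.
    by move=> a b /addrI [].
  move=> n; rewrite mem_filter mem_window; apply/andP/mapP => [[/andP[Ln nL] _]|[i]].
    by exists `|n - L|%N; [rewrite mem_iota | ]; lia.
  by rewrite mem_iota => iL ->; split; lia.
rewrite big_map (_ : iota 0 d.+1 = index_iota 0 d.+1) ?big_mkord; last by rewrite /index_iota subn0.
rewrite horner_poly mulr_sumr; apply: eq_bigr => i _.
rewrite /laurent_outside ifT ?subr0 ?exprzDr //; first by rewrite mulrCA.
by apply/andP; split; have := ltn_ord i; lia.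
Qed.

Lemma sum_dom_neq0 n (F : 'I_n -> C) i0 : F i0 != 0 ->
  (forall i, i != i0 -> abs (F i) < abs (F i0)) -> \sum_(i < n) F i != 0.
Proof.
move=> Fi0 Fdom; have dom : abs (\sum_(i < n | i != i0) F i) < abs (F i0).
  by apply: abs_sum_lt => //; exact: abs_gt0.
rewrite (bigD1 i0) //=; apply: contra_neq Fi0 => /(congr1 abs).
by rewrite absD_eq_l // abs0 => /abs_eq0.
Qed.

Lemma root_abs_eq1 (P : {poly C}) z : (forall i, abs P`_i <= 1) ->
  abs P`_0 = 1 -> abs (lead_coef P) = 1 -> root P z -> abs z = 1.
Proof.
move=> P1 P01 lc1; rewrite rootE horner_coef => /eqP Pz0.
have P0 : (0 < size P)%N by rewrite lt0n size_poly_eq0 -lead_coef_eq0 abs_eq1_neq0.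
have F1 (i : 'I_(size P)) : abs (P`_i * z ^+ i) <= abs z ^+ i.
  by rewrite absM absX -[X in _ <= X]mul1r ler_wpM2r ?exprn_ge0.
have [z1|z1|//] := ltgtP (abs z) 1; exfalso; move/eqP: Pz0; apply/negP.
  apply: (@sum_dom_neq0 _ _ (Ordinal P0)); first by rewrite /= expr0 mulr1 abs_eq1_neq0.
  move=> i /= i0; rewrite expr0 mulr1 P01; apply: le_lt_trans (F1 i) _.
  by rewrite exprn_ilt1 ?abs_ge0 // lt0n.
have lastP : ((size P).-1 < size P)%N by rewrite prednK.
have lcP : P`_(size P).-1 = lead_coef P by rewrite lead_coefE.
have z0 : z != 0 by apply/eqP => z0; move: z1; rewrite z0 abs0 ltr10.
apply: (@sum_dom_neq0 _ _ (Ordinal lastP)) => /=.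
  by rewrite lcP mulf_neq0 ?expf_neq0 // abs_eq1_neq0.
move=> i /= ilast; apply: le_lt_trans (F1 i) _; rewrite lcP absM lc1 mul1r absX.
rewrite ltr_eXn2l //; have := ltn_ord i; move: ilast; rewrite -val_eqE /=; lia.
Qed.

Lemma abs_prod_lt1 (s : seq C) (y : C) : abs (\prod_(z <- s) (y - z)) < 1 ->
  exists2 z, z \in s & abs (y - z) < 1.
Proof.
elim: s => [|z s IH]; first by rewrite big_nil abs1 ltxx.
rewrite big_cons absM; have [yz _|yz] := ltP (abs (y - z)) 1; first by exists z; rewrite ?mem_head.
move=> /(le_lt_trans (ler_peMl (abs_ge0 _) yz)) /IH [w ws yw].
by exists w; rewrite // inE ws orbT.
Qed.

Lemma pigeonhole_close (rs : seq C) (x : nat -> C) :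
  (forall i, (i <= size rs)%N -> exists2 z, z \in rs & abs (x i - z) < 1) ->
  exists a b, [/\ (a < b)%N, (b <= size rs)%N & abs (x a - x b) < 1].
Proof.
move=> near; have rs0 : (0 < size rs)%N.
  by have [z zs _] := near 0%N (leq0n _); rewrite lt0n size_eq0; apply: contraTneq zs => ->.
pose sigma (i : 'I_(size rs).+1) : 'I_(size rs) :=
  odflt (Ordinal rs0) [pick j : 'I_(size rs) | abs (x i - rs`_j) < 1].
have sigmaP (i : 'I_(size rs).+1) : abs (x i - rs`_(sigma i)) < 1.
  rewrite /sigma; case: pickP => [j //|none] /=; have [z zs xz] := near i (ltn_ord i).
  have zi : (index z rs < size rs)%N by rewrite index_mem.
  by have := none (Ordinal zi); rewrite /= nth_index // xz.
have /injectivePn[a [b ab sab]] : ~~ injectiveb sigma.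
  by apply/injectiveP => /leq_card; rewrite !card_ord ltnn.
have xab : abs (x a - x b) < 1.
  have -> : x a - x b = (x a - rs`_(sigma a)) - (x b - rs`_(sigma b)) by rewrite sab; ring.
  exact: absB_lt.
have [lt_ab|lt_ba|/val_inj eq_ab] := ltngtP a b; last by rewrite eq_ab eqxx in ab.
  by exists a, b; split => //; rewrite -ltnS.
by exists b, a; split; rewrite 1?absBC // -ltnS.
Qed.

Lemma exists_unity_root_close z N : (0 < N)%N -> abs (z ^+ N - 1) < 1 ->
  exists2 w, w ^+ N = 1 & abs (z - w) < 1.
Proof.
move=> N0 zN; have [rs rsE] := poly_split ('X^N - 1).
have lc : lead_coef ('X^N - 1 : {poly C}) = 1 by rewrite -polyC1 lead_coefXnsubC.
rewrite lc scale1r in rsE.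
have XN1 y : y ^+ N - 1 = \prod_(w <- rs) (y - w).
  have := congr1 (horner^~ y) rsE; rewrite /= horner_prod !hornerE => ->.
  by apply: eq_bigr => w _; rewrite hornerXsubC.
move: zN; rewrite XN1 => /abs_prod_lt1 [w wrs zw]; exists w => //.
by apply/eqP; rewrite -subr_eq0 XN1 (big_rem _ wrs) /= subrr mul0r.
Qed.

Lemma expr_fixed_abs_lt1 v n : (0 < n)%N -> abs v < 1 -> v ^+ n.+1 = v -> v = 0.
Proof.
move=> n0 v1 vn; have vn1 : v ^+ n != 1.
  apply/eqP => /(congr1 abs); rewrite absX abs1 => vn1.
  by have := exprn_ilt1 n (abs_ge0 v) v1; rewrite vn1 ltxx -lt0n n0.
have : v * (v ^+ n - 1) = 0 by rewrite mulrBr mulr1 -exprS vn subrr.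
by move/eqP; rewrite mulf_eq0 subr_eq0 (negPf vn1) orbF => /eqP.
Qed.

Lemma exists_ev_eq0_of_close_iterate f Q z : vanishes f ->
  (forall n, abs (f n) <= 1) -> (1 < Q)%N ->
  (forall y, abs y = 1 -> ev f y ^+ Q = ev f (y ^+ Q)) ->
  abs z = 1 -> abs (ev f z) < 1 -> abs (z ^+ Q - z) < 1 ->
  exists2 w, abs w = 1 & ev f w = 0.
Proof.
move=> vf f1 Q1 frob z1 fz zQ; have QE := prednK (ltnW Q1).
have N0 : (0 < Q.-1)%N by rewrite -ltnS QE.
have zN : abs (z ^+ Q.-1 - 1) < 1.
  by move: zQ; rewrite -{1}QE exprS -[X in _ - X]mulr1 -mulrBr absM z1 mul1r.
have [w wN zw] := exists_unity_root_close N0 zN.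
have w1 : abs w = 1 := abs_unity_root N0 wN.
have wQ : w ^+ Q = w by rewrite -QE exprSr wN mul1r.
exists w => //; apply: (expr_fixed_abs_lt1 N0); last by rewrite QE frob // wQ.
have -> : ev f w = ev f z + (ev f w - ev f z) by rewrite addrC subrK.
by apply: absD_lt fz (le_lt_trans (ev_lipschitz vf w1 z1 f1) _); rewrite absBC.
Qed.

Lemma ev_neq0_of_isolated f Q L : vanishes f -> (0 < Q)%N -> (Q%:R : C) != 0 ->
  (forall y, abs y = 1 -> ev f y ^+ Q = ev f (y ^+ Q)) -> f L != 0 ->
  (forall n, n != L -> (Q%:Z %| n - L)%Z -> abs (f n) < abs (f L)) ->
  forall w, abs w = 1 -> ev f w != 0.
Proof.
move=> vf Q0 QR frob fL iso w w1; apply/eqP => fw0.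
have [y0 y0w] := exists_nth_root w Q0.
have y01 : abs y0 = 1 by apply: (abs_expr_eq1 Q0); rewrite y0w.
have [xi xiQ] := exists_prim_root Q0 QR.
have xi1 := abs_unity_root (prim_order_gt0 xiQ) (prim_expr_order xiQ).
have := abs_trace_ev vf y01 xiQ QR fL iso; rewrite big1 ?abs0 => [|i _].
  by move/esym/eqP; rewrite mulf_eq0 => /orP[]/eqP/abs_eq0/eqP; rewrite ?(negPf QR) ?(negPf fL).
have yi1 : abs (y0 * xi ^+ i) = 1 by rewrite absM absX xi1 expr1n y01 mulr1.
have : ev f (y0 * xi ^+ i) ^+ Q = 0.
  by rewrite frob // exprMn y0w exprAC (prim_expr_order xiQ) expr1n mulr1.
by move/eqP; rewrite expf_eq0 => /andP[_ /eqP ->]; rewrite mul0r.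
Qed.

(* Up to a term of norm [< 1], [f(y)] is [y^L0 P(y)] with [P] the polynomial of the
   coefficients between the extreme unit coefficients; [P] has unit constant and
   leading coefficients, so its [d] roots lie on the unit circle. *)
Lemma small_ev_near_roots f L0 M0 : vanishes f -> (forall n, abs (f n) <= 1) ->
  L0 < M0 -> abs (f L0) = 1 -> abs (f M0) = 1 ->
  (forall n, abs (f n) = 1 -> L0 <= n <= M0) ->
  exists rs : seq C, [/\ size rs = `|M0 - L0|%N,
    forall z, z \in rs -> abs z = 1 /\ abs (ev f z) < 1 &
    forall y, abs y = 1 -> abs (ev f y) < 1 -> exists2 z, z \in rs & abs (y - z) < 1].
Proof.
move=> vf f1 LM fL1 fM1 ext; set d := `|M0 - L0|%N; have M0E : M0 = L0 + d%:Z by lia.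
set P := laurent_window_poly f L0 d; set g := laurent_outside f L0 d.
have vg : vanishes g.
  by apply: (vanishes_le vf) => n; rewrite /g /laurent_outside; case: ifP; rewrite ?abs0.
have g1 n : abs (g n) < 1.
  rewrite /g /laurent_outside; case: ifPn => [_|nLM]; first by rewrite abs0 ltr01.
  by rewrite lt_neqAle f1 andbT; apply: contra nLM => /eqP/ext; rewrite -M0E.
have [j gmax] := vanishes_argmax vg.
have evg y : abs y = 1 -> abs (ev g y) < 1.
  by move=> y1; exact: le_lt_trans (ev_le vg y1 gmax) (g1 j).
have evP y : abs y = 1 -> abs (y ^ L0 * P.[y]) = abs P.[y] by move=> y1; rewrite absM absXz1 ?mul1r.
have fM0 : f (L0 + (d.+1).-1%:Z) != 0 by rewrite -M0E abs_eq1_neq0.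
have lcP : lead_coef P = f M0 by rewrite lead_coef_poly // M0E.
have [rs rsE] := poly_split P; rewrite lcP in rsE.
have szrs : size rs = d.
  have : size P = d.+1 by exact: size_poly_eq fM0.
  rewrite rsE size_scale ?abs_eq1_neq0 //.
  by rewrite size_prod_XsubC => -[].
have PE y : P.[y] = f M0 * \prod_(z <- rs) (y - z).
  rewrite {1}rsE hornerZ horner_prod; congr (_ * _).
  by apply: eq_bigr => z _; rewrite hornerXsubC.
have fE y : abs y = 1 -> ev f y = y ^ L0 * P.[y] + ev g y := ev_window_split L0 d vf.
exists rs; split => // [z zrs | y y1 fy].
  have Pz : P.[z] = 0 by rewrite PE (big_rem _ zrs) /= subrr mul0r mulr0.
  have z1 : abs z = 1.
    apply: (root_abs_eq1 (P := P)); rewrite ?lcP ?rootE ?Pz //.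
      by move=> i; rewrite coef_poly; case: ifP; rewrite ?abs0 ?f1.
    by rewrite coef_poly addr0.
  by split => //; rewrite fE // Pz mulr0 add0r evg.
apply: abs_prod_lt1; rewrite -[abs _]mul1r -{1}fM1 -absM -PE -(evP _ y1).
by rewrite -[_ * _](addrK (ev g y)) -fE //; apply: absB_lt => //; apply: evg.
Qed.

Lemma exists_ev_eq0_of_two_unit_coefs f q L0 M0 : vanishes f ->
  (forall n, abs (f n) <= 1) -> (1 < q)%N ->
  (forall n y, abs y = 1 -> ev f y ^+ (q ^ n) = ev f (y ^+ (q ^ n))) ->
  L0 < M0 -> abs (f L0) = 1 -> abs (f M0) = 1 ->
  (forall n, abs (f n) = 1 -> L0 <= n <= M0) ->
  exists2 w, abs w = 1 & ev f w = 0.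
Proof.
move=> vf f1 q1 frob LM fL1 fM1 ext.
have [rs [szrs rsP near]] := small_ev_near_roots vf f1 LM fL1 fM1 ext.
have [beta brs] : exists beta, beta \in rs by exists rs`_0; rewrite mem_nth // szrs; lia.
(* The [d + 1] points [beta^(q^i)] all have [|f| < 1], so two of them are close to
   the same root. *)
have [b1 fb] := rsP _ brs; pose x i := beta ^+ (q ^ i).
have x1 i : abs (x i) = 1 by rewrite absX b1 expr1n.
have fx i : abs (ev f (x i)) < 1.
  by rewrite -frob // absX exprn_ilt1 ?abs_ge0 // -lt0n expn_gt0 (ltnW q1).
have [a [b [ab bd xab]]] := pigeonhole_close (fun i _ => near _ (x1 i) (fx i)).
have xb : x b = x a ^+ (q ^ (b - a)) by rewrite /x -exprM -expnD subnKC // ltnW.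
apply: (exists_ev_eq0_of_close_iterate vf f1 _ (frob (b - a)%N) (x1 a) (fx a)).
  by rewrite -[1%N](expn0 q) ltn_exp2l // subn_gt0.
by rewrite -xb absBC.
Qed.

Lemma unit_coef_unique f q : vanishes f -> (forall n, abs (f n) <= 1) ->
  (1 < q)%N -> (q%:R : C) != 0 ->
  (forall n y, abs y = 1 -> ev f y ^+ (q ^ n) = ev f (y ^+ (q ^ n))) ->
  forall L M, abs (f L) = 1 -> abs (f M) = 1 -> L = M.
Proof.
move=> vf f1 q1 qR frob L M fL1 fM1; apply/eqP/negPn/negP => LM.
have [L0 [M0 [fL01 fM01 ext]]] := exists_extreme_unit_coefs vf fL1.
have L0M0 : L0 < M0.
  have /andP[? ?] := ext _ fL1; have /andP[? ?] := ext _ fM1; move/eqP: LM; lia.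
have [w w1 fw0] := exists_ev_eq0_of_two_unit_coefs vf f1 q1 frob L0M0 fL01 fM01 ext.
set d := `|M0 - L0|%N; have Qd : (d < q ^ d)%N := ltn_expl d q1.
suff : ev f w != 0 by rewrite fw0 eqxx.
(* Indices [n <> L0] with [n = L0 %[mod q^d]] lie outside [[L0, M0]], as [q^d > d]. *)
apply: (ev_neq0_of_isolated (L := L0) vf _ _ (frob d)) w1.
- by rewrite expn_gt0 (ltnW q1).
- by rewrite natrX expf_neq0.
- exact: abs_eq1_neq0.
move=> n nL0; rewrite dvdzE => /(dvdn_leq _) Qn; rewrite fL01 lt_neqAle f1 andbT.
by apply/eqP => /ext; move: Qn; rewrite absz_gt0 subr_eq0 nL0 => /(_ isT); lia.
Qed.

Lemma max_coef_abs_eq1 f q j : vanishes f -> (1 < q)%N ->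
  (forall y, abs y = 1 -> ev f y ^+ q = ev f (y ^+ q)) ->
  (forall n, abs (f n) <= abs (f j)) -> (exists2 z, abs z = 1 & abs (ev f z) = 1) ->
  abs (f j) = 1.
Proof.
move=> vf q1 frob jmax [z z1 fz1]; apply/eqP; rewrite eq_le -{2}fz1 ev_le // andbT.
have [y y1 fjy] := ev_ge_max_coef vf jmax.
have fjq : abs (f j) ^+ q <= abs (f j).
  apply: le_trans (lerXn2r _ _ _ fjy) _; rewrite ?nnegrE ?abs_ge0 // -absX frob //.
  by apply: ev_le; rewrite // absX y1 expr1n.
by rewrite leNgt; apply/negP => fj1; move: fjq; rewrite leNgt (ltr_eXnr q fj1) q1.
Qed.

Lemma special_of_frobenius f q zeta zeta' : vanishes f ->
  (exists k : nat, (0 < k)%N /\ q = (p ^ k)%N) ->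
  is_root_of_unity_C zeta -> is_root_of_unity_C zeta' ->
  laurent_eval_to abs f zeta zeta' -> laurent_pow_to abs f q (laurent_subst_pow q f) ->
  special f.
Proof.
move=> vf [k [k0 qE]] [n [n0 zn]] [n' [n'0 zn']] fz fq.
have q1 : (1 < q)%N by rewrite qE -[1%N](expn0 p) ltn_exp2l ?prime_gt1.
have frob y : abs y = 1 -> ev f y ^+ q = ev f (y ^+ q).
  by move=> y1; apply: ev_frobenius (ltnW q1) fq.
have frob_iter m y : abs y = 1 -> ev f y ^+ (q ^ m) = ev f (y ^+ (q ^ m)).
  by move=> y1; apply: ev_frobenius_iter (ltnW q1) fq.
have z1 := abs_unity_root n0 zn.
have fz1 : abs (ev f zeta) = 1.
  by rewrite (ev_unique vf z1 (proj1 (laurent_eval_toE _ _ _) fz)) (abs_unity_root n'0 zn').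
have [j jmax] := vanishes_argmax vf.
have fj1 := max_coef_abs_eq1 vf q1 frob jmax (ex_intro2 _ _ zeta z1 fz1).
have f1 m : abs (f m) <= 1 by rewrite -fj1 jmax.
have qR : (q%:R : C) != 0.
  rewrite qE natrX expf_neq0 //; apply/eqP => p0; move: abs_p; rewrite p0 abs0 => /esym/eqP.
  by rewrite invr_eq0 pnatr_eq0 gtn_eqF ?prime_gt0.
have uniq := unit_coef_unique vf f1 q1 qR frob_iter.
exact: special_of_unique_unit_coef vf k0 qE frob f1 fj1 (fun m fm1 => uniq m j fm1 fj1).
Qed.

End LaurentFrobenius.

Theorem mainTheorem5 (R : realType) (C : fieldType) (abs : C -> R) (p : nat)
  (K : C -> Prop) (f : int -> C) (q : nat) (zeta zeta' : C) :
  prime p ->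
  is_Cp abs p ->
  is_padic_field abs K ->
  in_AK11 abs K f ->
  (exists k : nat, (0 < k)%N /\ q = (p ^ k)%N) ->
  is_root_of_unity_C zeta -> is_root_of_unity_C zeta' ->
  laurent_eval_to abs f zeta zeta' ->
  laurent_pow_to abs f q (laurent_subst_pow q f) ->
  special f.
Proof.
move=> p_prime [[abs_ge0 abs_eq0 absM absD abs_p] closedC complete _] _ [_ vf].
exact: (special_of_frobenius abs_ge0 abs_eq0 absM absD complete closedC p_prime abs_p vf).
Qed.
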